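(* Let $S_0$ be a nonempty set and let $\mathcal{G}$ be a group acting simply transitively on $S_0$ (for every $x,y \in S_0$ there is a unique $T \in \mathcal{G}$ with $Tx = y$). Let $S$ be a collection of subsets of $S_0$, partially ordered by set inclusion, and extend the action of $\mathcal{G}$ to subsets by $Ta = \{Tx : x \in a\}$ (assume $S$ is closed under this action). Suppose every $a \in S$ has the fixed point property with respect to $\mathcal{G}$: for all $T \in \mathcal{G}$, $Ta \subseteq a$ implies there exists $x \in a$ with $Tx = x$. Then on the set $S/\mathcal{G}$ of orbits, the strong relation ($A \preceq B$ iff for all $a \in A$ there is $b \in B$ with $a \subseteq b$) and the weak relation ($A \preceq B$ iff there exist $a \in A$, $b \in B$ with $a \subseteq b$) are identical, and this relation is a partial order on $S/\mathcal{G}$. *)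

From mathcomp Require Import all_boot.
From mathcomp Require Import boolp classical_sets.
Set Implicit Arguments. Unset Strict Implicit. Unset Printing Implicit Defensive.
Local Open Scope classical_set_scope.

Definition is_group (G : Type) (mul : G -> G -> G) (inv : G -> G) (one : G) : Prop :=
  [/\ (forall a b c, mul a (mul b c) = mul (mul a b) c),
      (forall a, mul one a = a),
      (forall a, mul a one = a),
      (forall a, mul (inv a) a = one) &
      (forall a, mul a (inv a) = one)].

Definition is_action (G X : Type) (mul : G -> G -> G) (one : G)
  (act : G -> X -> X) : Prop :=
  (forall x, act one x = x) /\
  (forall g h x, act (mul g h) x = act g (act h x)).

Definition simply_transitive (G X : Type) (act : G -> X -> X) : Prop :=
  forall x y : X, exists! T : G, act T x = y.

Definition act_set (G X : Type) (act : G -> X -> X) (T : G) (a : set X) : set X :=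
  act T @` a.

Definition fixed_point_property (G X : Type) (act : G -> X -> X) (a : set X) : Prop :=
  forall T : G, act_set act T a `<=` a -> exists2 x, a x & act T x = x.

Definition orbit (G X : Type) (act : G -> X -> X) (a : set X) : set (set X) :=
  [set b | exists T : G, b = act_set act T a].

Definition orbits (G X : Type) (act : G -> X -> X) (S : set (set X)) : set (set (set X)) :=
  [set A | exists2 a, S a & A = orbit act a].

Definition strong_le (X : Type) (A B : set (set X)) : Prop :=
  forall a, A a -> exists2 b, B b & a `<=` b.

Definition weak_le (X : Type) (A B : set (set X)) : Prop :=
  exists a b, [/\ A a, B b & a `<=` b].

From Pilot Require Import Defs.
From mathcomp Require Import all_boot.
From mathcomp Require Import boolp classical_sets.
Set Implicit Arguments. Unset Strict Implicit. Unset Printing Implicit Defensive.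
Local Open Scope classical_set_scope.

(* An orbit is the orbit of each of its members, and inclusion [a <= b]
   gives [U a <= U b] for every [U]: so for orbits the weak relation already
   implies the strong one.  For antisymmetry, [a <= T b] and [b <= U a] give
   [(T U)^-1 a <= a]; the fixed point property yields a point fixed by
   [(T U)^-1], and since the action is simply transitive, hence free,
   [T U = 1], whence [a = T b] and the two orbits coincide. *)

Section StrongLe.

Variable X : Type.

Lemma strong_le_refl (A : set (set X)) : strong_le A A.
Proof. by move=> a Aa; exists a. Qed.

Lemma strong_le_trans (A B C : set (set X)) :
  strong_le A B -> strong_le B C -> strong_le A C.
Proof.
move=> AB BC a Aa; have [b Bb ab] := AB a Aa; have [c Cc bc] := BC b Bb.
by exists c => //; apply: subset_trans bc.
Qed.

Lemma weak_le_of_strong (A B : set (set X)) (a : set X) :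
  A a -> strong_le A B -> weak_le A B.
Proof. by move=> Aa AB; have [b Bb ab] := AB a Aa; exists a, b. Qed.

End StrongLe.

Section ActionOnSubsets.

Variables (G X : Type) (mul : G -> G -> G) (inv : G -> G) (one : G).
Variable act : G -> X -> X.
Hypothesis mulA : forall g h k, mul g (mul h k) = mul (mul g h) k.
Hypothesis mulg1 : forall g, mul g one = g.
Hypothesis mulVg : forall g, mul (inv g) g = one.
Hypothesis mulgV : forall g, mul g (inv g) = one.
Hypothesis act1 : forall x, act one x = x.
Hypothesis actM : forall g h x, act (mul g h) x = act g (act h x).

Local Notation "T ** a" := (act_set act T a) (at level 40).

Lemma act_set1 (a : set X) : one ** a = a.
Proof.
apply/seteqP; split=> x; first by case=> y ay <-; rewrite act1.
by move=> ax; exists x; rewrite ?act1.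
Qed.

Lemma act_setM (g h : G) (a : set X) : mul g h ** a = g ** (h ** a).
Proof.
apply/seteqP; split=> x.
  by case=> y ay <-; exists (act h y); [exists y | rewrite actM].
by case=> _ [y ay <-] <-; exists y; rewrite ?actM.
Qed.

Lemma act_setVK (g : G) (a : set X) : inv g ** (g ** a) = a.
Proof. by rewrite -act_setM mulVg act_set1. Qed.

Lemma act_setS (g : G) (a b : set X) : a `<=` b -> g ** a `<=` g ** b.
Proof. by move=> ab _ [y ay <-]; exists y => //; apply: ab. Qed.

Lemma orbit_refl (a : set X) : Defs.orbit act a a.
Proof. by exists one; rewrite act_set1. Qed.

Lemma orbit_act_set (T : G) (a : set X) :
  Defs.orbit act (T ** a) = Defs.orbit act a.
Proof.
apply/seteqP; split=> _ [g ->]; first by exists (mul g T); rewrite act_setM.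
by exists (mul g (inv T)); rewrite -act_setM -mulA mulVg mulg1.
Qed.

Lemma strong_le_orbit (a b : set X) :
  a `<=` b -> strong_le (Defs.orbit act a) (Defs.orbit act b).
Proof.
move=> ab _ [U ->]; exists (U ** b); first by exists U.
exact: act_setS.
Qed.

Lemma strong_le_of_weak (a b : set X) :
  weak_le (Defs.orbit act a) (Defs.orbit act b) ->
  strong_le (Defs.orbit act a) (Defs.orbit act b).
Proof.
move=> [_ [_ [[T1 ->] [T2 ->] sub]]].
rewrite -(orbit_act_set T1 a) -(orbit_act_set T2 b).
exact: strong_le_orbit.
Qed.

Section FixedPoint.

Variable S : set (set X).
Hypothesis act_free : forall T x, act T x = x -> T = one.
Hypothesis fpS : forall a, S a -> fixed_point_property act a.

Lemma act_set_sub_one (T : G) (a : set X) : S a -> T ** a `<=` a -> T = one.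
Proof. by move=> Sa /(fpS Sa) [x _ /act_free]. Qed.

Lemma sub_act_set_one (T : G) (a : set X) : S a -> a `<=` T ** a -> T = one.
Proof.
move=> Sa /(act_setS (g := inv T)).
rewrite act_setVK => /(act_set_sub_one Sa) VT1.
by rewrite -[T]mulg1 -VT1 mulgV.
Qed.

Lemma strong_le_orbit_antisym (a b : set X) : S a ->
  strong_le (Defs.orbit act a) (Defs.orbit act b) ->
  strong_le (Defs.orbit act b) (Defs.orbit act a) ->
  Defs.orbit act a = Defs.orbit act b.
Proof.
move=> Sa ab ba.
have [_ [T ->] aTb] := ab a (orbit_refl a).
have [_ [U ->] bUa] := ba b (orbit_refl b).
have TU1 : mul T U = one.
  apply: (sub_act_set_one Sa); rewrite act_setM.
  exact: subset_trans aTb (act_setS (g := T) bUa).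
suff -> : a = T ** b by rewrite orbit_act_set.
apply/seteqP; split=> //; apply: (subset_trans (act_setS (g := T) bUa)).
by rewrite -act_setM TU1 act_set1.
Qed.

End FixedPoint.

End ActionOnSubsets.

Lemma simply_transitive_free (G X : Type) (one : G) (act : G -> X -> X) :
  (forall x, act one x = x) -> simply_transitive act ->
  forall T x, act T x = x -> T = one.
Proof.
move=> act1 st T x Tx; have [U [_ Uuniq]] := st x x.
by rewrite -(Uuniq T Tx) -(Uuniq one (act1 x)).
Qed.

Theorem corollary2 (G X : Type) (mul : G -> G -> G) (inv : G -> G) (one : G)
  (act : G -> X -> X) (S : set (set X))
  (HX : inhabited X)
  (Hgrp : is_group mul inv one)
  (Hact : is_action mul one act)
  (Hst : simply_transitive act)
  (HS : forall T a, S a -> S (act_set act T a))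
  (Hfp : forall a, S a -> fixed_point_property act a) :
  (forall A B, orbits act S A -> orbits act S B ->
     (strong_le A B <-> weak_le A B)) /\
  (* partial order on S/G *)
  (forall A, orbits act S A -> strong_le A A) /\
  (forall A B, orbits act S A -> orbits act S B ->
     strong_le A B -> strong_le B A -> A = B) /\
  (forall A B C, orbits act S A -> orbits act S B -> orbits act S C ->
     strong_le A B -> strong_le B C -> strong_le A C).
Proof.
have [mulA _ mulg1 mulVg mulgV] := Hgrp; have [act1 actM] := Hact.
have act_free := simply_transitive_free act1 Hst.
split; last split; last split.
- move=> _ _ [a _ ->] [b _ ->]; split.
    exact: weak_le_of_strong (orbit_refl act1 a).
  exact: strong_le_of_weak mulA mulg1 mulVg actM a b.
- by move=> A _; apply: strong_le_refl.
- move=> _ _ [a Sa ->] [b _ ->].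
  exact: (strong_le_orbit_antisym mulA mulg1 mulVg mulgV act1 actM
            act_free Hfp Sa).
- by move=> A B C _ _ _; apply: strong_le_trans.
Qed.
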